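(* Let $f\colon S^1\to S^1$ be a self-transverse smooth map, let $J$ be an arc in the range whose endpoints $x,y$ are regular values of $f$, and suppose that $J_+$ is a positive arc and $J_-$ a negative arc in $f^{-1}(J)$. Then there exists an embedded path $p\colon(I,\partial I)\to(S^1,f^{-1}(x))$ which either starts with $J_+$ and ends with some negative arc $J'_-$ of $f^{-1}(J)$, or starts with $J_-$ and ends with some positive arc $J'_+$ of $f^{-1}(J)$, such that $f\circ p\colon(I,\partial I)\to(S^1,\{x\})$ factors through $(\mathbb{R},\{0\})$ (i.e. lifts to the universal cover $\mathbb{R}\to S^1$ with both endpoints going to $0$).
   Context: Orient both circles. For an arc $J$ in the range transverse to $f$, an orientation of $J$ induces an orientation of $f^{-1}(J)$ via the co-orientation. A component $C$ of $f^{-1}(J)$ is a positive (resp. negative) arc if $f|_C\colon(C,\partial C)\to(J,\partial J)$ has degree $+1$ (resp. $-1$). ''Starts with $J_+$'' means $J_+$ is an initial subarc of the path $p$ (beginning at its endpoint in $f^{-1}(x)$), and ''ends with $J'_-$'' means $J'_-$ is a terminal subarc of $p$. *)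

From Stdlib Require Import Reals ZArith.
From Coquelicot Require Import Coquelicot.
Open Scope R_scope.

(* The circle S^1 = R / Z.  A real number t represents the point [t]. *)
Definition cong (s t : R) : Prop := exists k : Z, t = s + IZR k.

(* A smooth map f : S^1 -> S^1 is given by a smooth lift F : R -> R with
   F (t + 1) = F t + d for some integer d (the degree); f [t] = [F t]. *)
Definition smooth_circle_map (F : R -> R) : Prop :=
  (forall (n : nat) (t : R), ex_derive_n F n t) /\
  exists d : Z, forall t, F (t + 1) = F t + IZR d.

Definition regular_value (F : R -> R) (x : R) : Prop :=
  forall t, cong (F t) x -> Derive F t <> 0.

(* f is self-transverse: f x f : S^1 x S^1 -> S^1 x S^1 is transverse to the
   diagonal away from the diagonal, i.e. no two distinct points with the same
   image are both critical. *)
Definition self_transverse (F : R -> R) : Prop :=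
  forall s t, ~ cong s t -> cong (F s) (F t) ->
    Derive F s = 0 -> Derive F t = 0 -> False.

(* The arc J in the range is the image of [a,b] (a < b < a + 1), oriented
   from x = [a] to y = [b]. *)
Definition proper_arc (a b : R) : Prop := a < b < a + 1.

Definition inJ (a b : R) (y : R) : Prop :=
  exists k : Z, a + IZR k <= y <= b + IZR k.

(* [u,v] (u < v) lifts a connected component (an arc) of f^{-1}(J):
   it lies in the preimage, and it is maximal among intervals in the preimage. *)
Definition component_arc (F : R -> R) (a b u v : R) : Prop :=
  u < v /\
  (forall t, u <= t <= v -> inJ a b (F t)) /\
  (forall eps, 0 < eps ->
     (exists t, u - eps < t < u /\ ~ inJ a b (F t)) /\
     (exists t, v < t < v + eps /\ ~ inJ a b (F t))).

Definition bdry_val (F : R -> R) (a b w : R) (e : Z) : Prop :=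
  (cong (F w) a /\ e = 0%Z) \/ (cong (F w) b /\ e = 1%Z).

(* Degree of f|_C : (C, dC) -> (J, dJ), C = [u,v] oriented by the domain
   (increasing t), J oriented from x to y. *)
Definition arc_degree (F : R -> R) (a b u v : R) (n : Z) : Prop :=
  exists eu ev : Z, bdry_val F a b u eu /\ bdry_val F a b v ev /\ n = (ev - eu)%Z.

Definition positive_arc (F : R -> R) (a b u v : R) : Prop :=
  component_arc F a b u v /\ arc_degree F a b u v 1%Z.

Definition negative_arc (F : R -> R) (a b u v : R) : Prop :=
  component_arc F a b u v /\ arc_degree F a b u v (-1)%Z.

(* Paths p : I -> S^1 are given by lifts P : R -> R, considered on [0,1]. *)
Definition cont_on01 (P : R -> R) : Prop :=
  forall tau, 0 <= tau <= 1 -> forall eps, 0 < eps ->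
    exists delta, 0 < delta /\
      forall sg, 0 <= sg <= 1 -> Rabs (sg - tau) < delta -> Rabs (P sg - P tau) < eps.

(* p is an embedding of I into S^1 (continuous and injective, I compact). *)
Definition embedded_path (P : R -> R) : Prop :=
  cont_on01 P /\
  forall t1 t2, 0 <= t1 <= 1 -> 0 <= t2 <= 1 -> cong (P t1) (P t2) -> t1 = t2.

Definition starts_with (P : R -> R) (u v e : R) : Prop :=
  exists (s : R) (m : Z), 0 < s <= 1 /\ P 0 = e + IZR m /\
    (forall tau, 0 <= tau <= s -> u + IZR m <= P tau <= v + IZR m) /\
    (forall w, u + IZR m <= w <= v + IZR m -> exists tau, 0 <= tau <= s /\ P tau = w).

Definition ends_with (P : R -> R) (u v e : R) : Prop :=
  exists (s : R) (m : Z), 0 <= s < 1 /\ P 1 = e + IZR m /\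
    (forall tau, s <= tau <= 1 -> u + IZR m <= P tau <= v + IZR m) /\
    (forall w, u + IZR m <= w <= v + IZR m -> exists tau, s <= tau <= 1 /\ P tau = w).

(* f o p : (I, dI) -> (S^1, {x}) factors through (R, {0}) via the covering
   R -> S^1, r |-> x + r. *)
Definition factors_through_R (F P : R -> R) (a : R) : Prop :=
  exists g : R -> R, cont_on01 g /\ g 0 = 0 /\ g 1 = 0 /\
    forall tau, 0 <= tau <= 1 -> cong (a + g tau) (F (P tau)).

From Stdlib Require Import Reals ZArith Lra Lia Classical.
From Coquelicot Require Import Coquelicot.
Open Scope R_scope.

(* Lift f to F : R -> R with F (t + 1) = F t + deg f, and suppose deg f <= 0
   (otherwise replace F by t |-> F (-t) and start from J_- instead of J_+).
   A lift [p, q] of J_+ climbs from a level a + K to b + K.  Since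
   F (p + 1) <= F p, F must come back to a + K before p + 1; at the first such
   time v the crossing is downwards because x is a regular value, and the arc
   of f^-1(J) ending at v, which starts at the last time before v that F
   leaves J, descends from b + K to a + K: it is a negative arc.  The segment
   from p to v is shorter than 1, so it embeds in S^1, and F v = F p makes
   f o p lift to a loop at 0. *)

Lemma small_pos d1 d2 : 0 < d1 -> 0 < d2 -> exists h, 0 < h /\ h < d1 /\ h < d2.
Proof.
  intros H1 H2. exists (Rmin d1 d2 / 2).
  assert (Hm := Rmin_pos d1 d2 H1 H2).
  assert (Hl := Rmin_l d1 d2). assert (Hr := Rmin_r d1 d2). lra.
Qed.

Lemma continuity_pt_ball f x eps : continuity_pt f x -> 0 < eps ->
  exists d, 0 < d /\ forall y, x - d < y < x + d -> Rabs (f y - f x) < eps.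
Proof.
  intros Hf Heps. destruct (Hf eps Heps) as [d [Hd Hy]].
  exists d. split; [exact Hd|]. intros y Hyx.
  destruct (Req_dec y x) as [->|Hne].
  - unfold Rminus. rewrite Rplus_opp_r, Rabs_R0. exact Heps.
  - apply (Hy y). split; [split; [exact I| auto]|]. simpl. unfold R_dist.
    apply Rabs_def1; lra.
Qed.

Lemma continuity_pt_lt f x c : continuity_pt f x -> f x < c ->
  exists d, 0 < d /\ forall y, x - d < y < x + d -> f y < c.
Proof.
  intros Hf Hx. destruct (continuity_pt_ball f x (c - f x) Hf) as [d [Hd Hy]]; [lra|].
  exists d. split; [exact Hd|]. intros y Hyx. specialize (Hy y Hyx).
  apply Rabs_def2 in Hy. lra.
Qed.

Lemma continuity_pt_gt f x c : continuity_pt f x -> c < f x ->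
  exists d, 0 < d /\ forall y, x - d < y < x + d -> c < f y.
Proof.
  intros Hf Hx. destruct (continuity_pt_ball f x (f x - c) Hf) as [d [Hd Hy]]; [lra|].
  exists d. split; [exact Hd|]. intros y Hyx. specialize (Hy y Hyx).
  apply Rabs_def2 in Hy. lra.
Qed.

Lemma ivt_in f p q x1 x2 y : continuity f -> p <= x1 <= q -> p <= x2 <= q ->
  (f x1 - y) * (f x2 - y) <= 0 -> exists z, p <= z <= q /\ f z = y.
Proof.
  intros Hf Hx1 Hx2 Hy.
  assert (Hg : continuity (fun s => f s - y)).
  { apply (continuity_minus f (fun _ => y)); [exact Hf|].
    apply continuity_const. intros s t. reflexivity. }
  destruct (Rle_or_lt x1 x2) as [H12|H21].
  - destruct (IVT_cor _ x1 x2 Hg H12 Hy) as [z [Hz Hfz]]. exists z. split; [lra|lra].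
  - destruct (IVT_cor _ x2 x1 Hg ltac:(lra) ltac:(lra)) as [z [Hz Hfz]].
    exists z. split; [lra|lra].
Qed.

Lemma lub_approx E m : is_lub E m -> forall eps, 0 < eps ->
  exists x, E x /\ m - eps < x <= m.
Proof.
  intros [Hub Hlub] eps Heps. apply NNPP. intro Hno.
  assert (Hm : is_upper_bound E (m - eps)).
  { intros x Ex. apply Rnot_lt_le. intro Hx. apply Hno. exists x.
    split; [exact Ex|]. split; [lra| apply Hub, Ex]. }
  apply Hlub in Hm. lra.
Qed.

Lemma first_crossing f q z c : continuity f -> q <= z -> c < f q -> f z <= c ->
  exists v, q < v <= z /\ f v = c /\ forall s, q <= s < v -> c < f s.
Proof.
  intros Hf Hqz Hq Hz.
  set (E := fun x => q <= x /\ forall s, q <= s <= x -> c < f s).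
  assert (HzE : is_upper_bound E z).
  { intros x [Hx HEx]. apply Rnot_lt_le. intro Hzx. specialize (HEx z ltac:(lra)). lra. }
  assert (HqE : E q) by (split; [lra| intros s Hs; replace s with q by lra; exact Hq]).
  destruct (completeness E (ex_intro _ z HzE) (ex_intro _ q HqE)) as [v Hv].
  assert (Hqv : q <= v) by (apply (proj1 Hv), HqE).
  assert (Hbefore : forall s, q <= s < v -> c < f s).
  { intros s Hs. destruct (lub_approx E v Hv (v - s)) as [x [[_ HEx] Hx]]; [lra|].
    apply HEx. lra. }
  assert (Hfv : f v = c).
  { destruct (Rtotal_order (f v) c) as [Hlt|[Heq|Hgt]]; [exfalso|exact Heq|exfalso].
    - assert (Hqv' : q < v) by (destruct (Req_dec q v) as [<-|]; lra).
      destruct (continuity_pt_lt f v c (Hf v) Hlt) as [d [Hd Hnear]].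
      destruct (small_pos d (v - q)) as [h [Hh [Hhd Hhq]]]; [exact Hd|lra|].
      specialize (Hnear (v - h) ltac:(lra)). specialize (Hbefore (v - h) ltac:(lra)). lra.
    - destruct (continuity_pt_gt f v c (Hf v) Hgt) as [d [Hd Hnear]].
      assert (Hfar : E (v + d / 2)).
      { split; [lra|]. intros s Hs.
        destruct (Rlt_le_dec s v); [apply Hbefore; lra| apply Hnear; lra]. }
      apply (proj1 Hv) in Hfar. lra. }
  exists v. split; [split|split; assumption].
  - destruct (Req_dec q v) as [<-|]; lra.
  - apply (proj2 Hv), HzE.
Qed.

Lemma last_escape (P : R -> Prop) t0 v : t0 <= v -> ~ P t0 ->
  exists u, t0 <= u <= v /\ (forall t, u < t <= v -> P t) /\
    forall eps, 0 < eps -> exists x, u - eps < x <= u /\ ~ P x.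
Proof.
  intros Hv Ht0. set (E := fun t => t0 <= t <= v /\ ~ P t).
  assert (HvE : is_upper_bound E v) by (intros x [Hx _]; lra).
  assert (Ht0E : E t0) by (split; [lra| exact Ht0]).
  destruct (completeness E (ex_intro _ v HvE) (ex_intro _ t0 Ht0E)) as [u Hu].
  assert (Ht0u : t0 <= u) by (apply (proj1 Hu), Ht0E).
  exists u. split; [split; [exact Ht0u| apply (proj2 Hu), HvE]|split].
  - intros t Ht. apply NNPP. intro Hnt.
    assert (Htu : t <= u) by (apply (proj1 Hu); split; [lra| exact Hnt]). lra.
  - intros eps Heps. destruct (lub_approx E u Hu eps Heps) as [x [[_ Hx] Hxu]].
    exists x. split; assumption.
Qed.

Lemma derivable_pt_lim_pos_incr f x l : derivable_pt_lim f x l -> 0 < l ->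
  exists d, 0 < d /\ forall h, 0 < h < d -> f (x - h) < f x < f (x + h).
Proof.
  intros Hf Hl. destruct (Hf l Hl) as [d Hd]. exists d. split; [apply cond_pos|].
  intros h Hh.
  assert (Hr := Hd h ltac:(lra) ltac:(rewrite Rabs_pos_eq; lra)).
  assert (Hl' := Hd (- h) ltac:(lra) ltac:(rewrite Rabs_Ropp, Rabs_pos_eq; lra)).
  apply Rabs_def2 in Hr. apply Rabs_def2 in Hl'.
  replace (x + - h) with (x - h) in Hl' by ring.
  split.
  - assert (E : f x - f (x - h) = (f (x - h) - f x) / - h * h) by (field; lra).
    assert (0 < (f (x - h) - f x) / - h * h) by (apply Rmult_lt_0_compat; lra). lra.
  - assert (E : f (x + h) - f x = (f (x + h) - f x) / h * h) by (field; lra).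
    assert (0 < (f (x + h) - f x) / h * h) by (apply Rmult_lt_0_compat; lra). lra.
Qed.

Lemma derivable_pt_lim_falls_after f x l e : derivable_pt_lim f x l -> l <> 0 -> 0 < e ->
  (forall h, 0 < h < e -> f x < f (x - h)) ->
  exists d, 0 < d /\ forall h, 0 < h < d -> f (x + h) < f x.
Proof.
  intros Hf Hl He Hleft.
  destruct (Rtotal_order l 0) as [Hneg|[Hz|Hpos]]; [|contradiction|exfalso].
  - destruct (derivable_pt_lim_pos_incr (- f)%F x (- l)) as [d [Hd Hinc]];
      [apply derivable_pt_lim_opp, Hf| lra|].
    exists d. split; [exact Hd|]. intros h Hh. specialize (Hinc h Hh).
    unfold opp_fct in Hinc. lra.
  - destruct (derivable_pt_lim_pos_incr f x l Hf Hpos) as [d [Hd Hinc]].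
    destruct (small_pos d e Hd He) as [h [Hh [Hhd Hhe]]].
    specialize (Hinc h (conj Hh Hhd)). specialize (Hleft h (conj Hh Hhe)). lra.
Qed.

Lemma cong_shift s K : cong (s + IZR K) s.
Proof. exists (- K)%Z. rewrite opp_IZR. ring. Qed.

Lemma cong_level y s : cong y s -> exists K, y = s + IZR K.
Proof. intros [k Hk]. exists (- k)%Z. rewrite opp_IZR. lra. Qed.

Lemma not_inJ_gap a b K y : proper_arc a b -> b + IZR K < y < a + IZR K + 1 -> ~ inJ a b y.
Proof.
  intros [Hab Hba] Hy [j Hj].
  destruct (Z_le_gt_dec j K) as [Hjk|Hjk].
  - apply IZR_le in Hjk. lra.
  - assert (Hj1 : (K + 1 <= j)%Z) by lia. apply IZR_le in Hj1.
    rewrite plus_IZR in Hj1. simpl in Hj1. lra.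
Qed.

Lemma band_cong_b a b K y : proper_arc a b -> a + IZR K <= y <= b + IZR K ->
  cong y b -> y = b + IZR K.
Proof.
  intros [Hab Hba] Hy [m Hm].
  assert (Hlo : IZR (- K) <= IZR m) by (rewrite opp_IZR; lra).
  assert (Hhi : IZR m < IZR (- K + 1)) by (rewrite plus_IZR, opp_IZR; simpl; lra).
  apply le_IZR in Hlo. apply lt_IZR in Hhi.
  assert (Hmk : m = (- K)%Z) by lia. subst m. rewrite opp_IZR in Hm. lra.
Qed.

Section ReturnArc.

Variables (F : R -> R) (a b : R).
Hypothesis F_cont : continuity F.
Hypothesis F_regular : forall t, cong (F t) a -> exists l, l <> 0 /\ derivable_pt_lim F t l.
Hypothesis J_arc : proper_arc a b.

Lemma band_connected K p q c : p <= c <= q -> a + IZR K <= F c <= b + IZR K ->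
  (forall t, p <= t <= q -> inJ a b (F t)) ->
  forall t, p <= t <= q -> a + IZR K <= F t <= b + IZR K.
Proof.
  intros Hc HFc HJ t Ht. pose proof J_arc as [Hab Hba].
  assert (Hcross : forall y, (F c - y) * (F t - y) <= 0 -> inJ a b y).
  { intros y Hy. destruct (ivt_in F p q c t y F_cont Hc Ht Hy) as [z [Hz <-]]. apply HJ, Hz. }
  split; apply Rnot_lt_le; intro Hout.
  - destruct (small_pos (a + IZR K - F t) (a + 1 - b)) as [h [Hh [Hh1 Hh2]]]; [lra|lra|].
    apply (not_inJ_gap a b (K - 1) (a + IZR K - h) J_arc); [rewrite minus_IZR; lra|].
    apply Hcross. assert (0 <= F c - (a + IZR K - h)) by lra. nra.
  - destruct (small_pos (F t - (b + IZR K)) (a + 1 - b)) as [h [Hh [Hh1 Hh2]]]; [lra|lra|].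
    apply (not_inJ_gap a b K (b + IZR K + h) J_arc); [lra|].
    apply Hcross. assert (F c - (b + IZR K + h) <= 0) by lra. nra.
Qed.

Lemma component_above_level K p q : component_arc F a b p q ->
  F p = a + IZR K -> F q = b + IZR K -> forall t, p < t <= q -> a + IZR K < F t.
Proof.
  intros [Hpq [HJ _]] HFp HFq. pose proof J_arc as [Hab Hba].
  assert (Hband := band_connected K p q p ltac:(lra) ltac:(lra) HJ).
  intros t Ht.
  destruct (Rle_lt_or_eq_dec _ _ (proj1 (Hband t ltac:(lra)))) as [Hlt|Heq]; [exact Hlt|].
  (* t would be an interior minimum of F on [p, q], i.e. a critical point over x *)
  exfalso. assert (Htq : t < q) by (destruct (Req_dec t q) as [->|]; lra).
  destruct (F_regular t) as [l [Hl0 Hl]]; [rewrite <- Heq; apply cong_shift|].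
  apply Hl0. change l with (derive_pt F t (exist _ l Hl)).
  apply (deriv_minimum F p q t); [lra|lra|].
  intros x Hx1 Hx2. rewrite <- Heq. apply Hband. lra.
Qed.

Lemma first_return_below K c p q : component_arc F a b p q ->
  F p = a + IZR K -> F q = b + IZR K ->
  (forall t, F (t + 1) = F t + c) -> F (p + 1) <= F p ->
  exists v, q < v < p + 1 /\ F v = a + IZR K /\
    (forall s, q <= s < v -> a + IZR K < F s) /\
    exists d, 0 < d /\ forall h, 0 < h < d -> F (v + h) < a + IZR K.
Proof.
  intros Harc HFp HFq Hper Hdrop.
  assert (Habove := component_above_level K p q Harc HFp HFq).
  destruct Harc as [Hpq _]. pose proof J_arc as [Hab Hba].
  assert (Hq1 : q < p + 1).
  { apply Rnot_le_lt. intro Hle. specialize (Habove (p + 1) ltac:(lra)). lra. }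
  destruct (first_crossing F q (p + 1) (a + IZR K) F_cont) as [v [Hv [HFv Hbefore]]];
    [lra|lra|lra|].
  destruct (F_regular v) as [l [Hl0 Hl]]; [rewrite HFv; apply cong_shift|].
  destruct (derivable_pt_lim_falls_after F v l (v - q) Hl Hl0) as [d [Hd Hafter]]; [lra| |].
  { intros h Hh. rewrite HFv. apply Hbefore. lra. }
  exists v. split; [split; [lra|]|split; [exact HFv| split; [exact Hbefore|]]].
  - (* if v = p + 1 then c = 0, so F would rise after v as it does after p *)
    apply Rnot_le_lt. intro Hv1. assert (Hvp : v = p + 1) by lra. subst v.
    destruct (small_pos d (q - p)) as [h [Hh [Hhd Hhq]]]; [exact Hd|lra|].
    assert (Hp := Hper p). assert (Hph := Hper (p + h)).
    replace (p + h + 1) with (p + 1 + h) in Hph by ring.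
    specialize (Hafter h ltac:(lra)). specialize (Habove (p + h) ltac:(lra)). lra.
  - exists d. split; [exact Hd|]. intros h Hh. rewrite <- HFv. apply Hafter, Hh.
Qed.

Lemma exits_below K v : F v = a + IZR K ->
  (exists d, 0 < d /\ forall h, 0 < h < d -> F (v + h) < a + IZR K) ->
  forall eps, 0 < eps -> exists t, v < t < v + eps /\ ~ inJ a b (F t).
Proof.
  intros HFv [d [Hd Hafter]] eps Heps. pose proof J_arc as [Hab Hba].
  destruct (continuity_pt_gt F v (b + IZR (K - 1)) (F_cont v)) as [d' [Hd' Hnear]].
  { rewrite HFv, minus_IZR. lra. }
  destruct (small_pos d d' Hd Hd') as [d0 [Hd0 [Hd0d Hd0d']]].
  destruct (small_pos eps d0 Heps Hd0) as [h [Hh [Hhe Hhd]]].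
  exists (v + h). split; [lra|]. apply (not_inJ_gap a b (K - 1) _ J_arc).
  specialize (Hafter h ltac:(lra)). specialize (Hnear (v + h) ltac:(lra)).
  rewrite minus_IZR in *. lra.
Qed.

Lemma component_ending_at K t0 v : t0 < v -> ~ inJ a b (F t0) ->
  F v = a + IZR K -> (forall s, t0 <= s < v -> a + IZR K < F s) ->
  (exists d, 0 < d /\ forall h, 0 < h < d -> F (v + h) < a + IZR K) ->
  exists u, t0 <= u /\ component_arc F a b u v /\ F u = b + IZR K.
Proof.
  intros Ht0v Ht0 HFv Hbefore Hafter. pose proof J_arc as [Hab Hba].
  destruct (last_escape (fun t => inJ a b (F t)) t0 v) as [u [Hu [Hin Hout]]];
    [lra| exact Ht0|].
  destruct (continuity_pt_lt F v (b + IZR K) (F_cont v)) as [d [Hd Hnear]]; [lra|].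
  destruct (small_pos d (v - t0)) as [d0 [Hd0 [Hd0d Hd0t]]]; [exact Hd|lra|].
  (* just before v, F stays strictly between a + K and b + K, hence in J *)
  assert (Huv : u <= v - d0).
  { apply Rnot_lt_le. intro Hlt.
    destruct (Hout (u - (v - d0))) as [x [Hx Hnx]]; [lra|]. apply Hnx. exists K.
    destruct (Req_dec x v) as [->|Hxv]; [lra|].
    specialize (Hbefore x ltac:(lra)). specialize (Hnear x ltac:(lra)). lra. }
  assert (Hband : forall t, u < t <= v -> a + IZR K <= F t <= b + IZR K).
  { intros t Ht. apply (band_connected K t v v); [lra| lra| |lra].
    intros s Hs. apply Hin. lra. }
  assert (HFu : F u = b + IZR K).
  { assert (Hu_above : a + IZR K < F u) by (apply Hbefore; lra).
    destruct (Rtotal_order (F u) (b + IZR K)) as [Hlt|[Heq|Hgt]]; [exfalso|exact Heq|exfalso].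
    - destruct (continuity_pt_lt F u _ (F_cont u) Hlt) as [e1 [He1 Hlt']].
      destruct (continuity_pt_gt F u _ (F_cont u) Hu_above) as [e2 [He2 Hgt']].
      destruct (small_pos e1 e2 He1 He2) as [e [He [Hee1 Hee2]]].
      destruct (Hout e He) as [x [Hx Hnx]]. apply Hnx. exists K.
      specialize (Hlt' x ltac:(lra)). specialize (Hgt' x ltac:(lra)). lra.
    - destruct (continuity_pt_gt F u _ (F_cont u) Hgt) as [e [He Hgt']].
      destruct (small_pos e (v - u)) as [h [Hh [Hhe Hhv]]]; [exact He|lra|].
      specialize (Hgt' (u + h) ltac:(lra)). specialize (Hband (u + h) ltac:(lra)). lra. }
  exists u. split; [lra|]. split; [|exact HFu]. split; [lra|split].
  - intros t Ht. destruct (Req_dec t u) as [->|Htu]; [exists K; lra| apply Hin; lra].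
  - intros eps Heps. split; [|exact (exits_below K v HFv Hafter eps Heps)].
    destruct (Hout eps Heps) as [x [Hx Hnx]]. exists x. split; [|exact Hnx].
    split; [lra|]. destruct (Req_dec x u) as [->|]; [|lra].
    exfalso. apply Hnx. exists K. lra.
Qed.

Lemma return_arc c p q : (forall t, F (t + 1) = F t + c) -> F (p + 1) <= F p ->
  component_arc F a b p q -> cong (F p) a -> cong (F q) b ->
  exists u v, component_arc F a b u v /\ cong (F u) b /\ cong (F v) a /\
    q < u /\ v < p + 1 /\ F v = F p.
Proof.
  intros Hper Hdrop Harc Hpa Hqb. pose proof J_arc as [Hab Hba].
  destruct (cong_level _ _ Hpa) as [K HFp].
  assert (HFq : F q = b + IZR K).
  { destruct Harc as [Hpq [HJ _]]. apply (band_cong_b a b K _ J_arc); [|exact Hqb].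
    apply (band_connected K p q p); [lra|lra|exact HJ|lra]. }
  destruct (first_return_below K c p q Harc HFp HFq Hper Hdrop)
    as [v [Hv [HFv [Hbefore Hafter]]]].
  destruct Harc as [Hpq [_ Hmax]].
  destruct (proj2 (Hmax (v - q) ltac:(lra))) as [t0 [Ht0 Hnt0]].
  destruct (component_ending_at K t0 v) as [u [Hu [Harc' HFu]]];
    [lra| exact Hnt0| exact HFv| intros s Hs; apply Hbefore; lra| exact Hafter|].
  exists u, v. split; [exact Harc'|]. split; [rewrite HFu; apply cong_shift|].
  split; [rewrite HFv; apply cong_shift|]. lra.
Qed.

End ReturnArc.

Lemma component_arc_reflect F G a b u v : (forall t, G t = F (- t)) ->
  component_arc F a b u v -> component_arc G a b (- v) (- u).
Proof.
  intros HG [Huv [HJ Hmax]]. split; [lra|split].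
  - intros t Ht. rewrite HG. apply HJ. lra.
  - intros eps Heps. destruct (Hmax eps Heps) as [[t1 [Ht1 Hn1]] [t2 [Ht2 Hn2]]]. split.
    + exists (- t2). rewrite HG, Ropp_involutive. split; [lra|exact Hn2].
    + exists (- t1). rewrite HG, Ropp_involutive. split; [lra|exact Hn1].
Qed.

Lemma regular_reflect F a : (forall t, cong (F t) a -> exists l, l <> 0 /\ derivable_pt_lim F t l) ->
  forall t, cong (F (- t)) a -> exists l, l <> 0 /\ derivable_pt_lim (fun s => F (- s)) t l.
Proof.
  intros Hreg t Ht. destruct (Hreg (- t) Ht) as [l [Hl0 Hl]]. exists (l * -1). split; [lra|].
  apply (derivable_pt_lim_comp Ropp F); [|exact Hl].
  apply is_derive_Reals. auto_derive; [exact I| ring].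
Qed.

Lemma continuity_reflect F : continuity F -> continuity (fun s => F (- s)).
Proof.
  intros Hf t. apply (continuity_pt_comp Ropp F); [|apply Hf].
  apply (continuity_pt_opp (fun s => s)), continuity_pt_id.
Qed.

Lemma arc_degree_1_iff F a b u v :
  arc_degree F a b u v 1 <-> cong (F u) a /\ cong (F v) b.
Proof.
  split.
  - intros [eu [ev [[[Hu ->]|[Hu ->]] [[[Hv ->]|[Hv ->]] Hn]]]]; try discriminate.
    split; assumption.
  - intros [Hu Hv]. exists 0%Z, 1%Z. split; [left; split; auto| split; [right; split; auto| reflexivity]].
Qed.

Lemma arc_degree_m1_iff F a b u v :
  arc_degree F a b u v (-1) <-> cong (F u) b /\ cong (F v) a.
Proof.
  split.
  - intros [eu [ev [[[Hu ->]|[Hu ->]] [[[Hv ->]|[Hv ->]] Hn]]]]; try discriminate.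
    split; assumption.
  - intros [Hu Hv]. exists 1%Z, 0%Z. split; [right; split; auto| split; [left; split; auto| reflexivity]].
Qed.

Definition lin_path (p0 p1 tau : R) : R := p0 + tau * (p1 - p0).

Lemma lin_path_continuous p0 p1 : continuity (lin_path p0 p1).
Proof.
  intro x. apply derivable_continuous_pt. exists (p1 - p0). apply is_derive_Reals.
  unfold lin_path. auto_derive; [exact I| ring].
Qed.

Lemma lin_path_param p0 p1 w : p0 <> p1 -> lin_path p0 p1 ((w - p0) / (p1 - p0)) = w.
Proof. intros Hp. unfold lin_path. field. lra. Qed.

Lemma cont_on01_of_continuity h : continuity h -> cont_on01 h.
Proof.
  intros Hc tau _ eps Heps. destruct (continuity_pt_ball h tau eps (Hc tau) Heps) as [d [Hd Hnear]].
  exists d. split; [exact Hd|]. intros sg _ Hs. apply Rabs_def2 in Hs. apply Hnear. lra.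
Qed.

Lemma lin_path_embedded p0 p1 : 0 < Rabs (p1 - p0) < 1 -> embedded_path (lin_path p0 p1).
Proof.
  intros Hr. split; [apply cont_on01_of_continuity, lin_path_continuous|].
  intros t1 t2 H1 H2 [m Hm]. unfold lin_path in Hm.
  assert (Em : IZR m = (t2 - t1) * (p1 - p0)) by lra.
  assert (Hm1 : Rabs (IZR m) < 1).
  { rewrite Em, Rabs_mult. assert (Rabs (t2 - t1) <= 1) by (apply Rabs_le; lra).
    assert (0 <= Rabs (t2 - t1)) by apply Rabs_pos. nra. }
  apply Rabs_def2 in Hm1.
  assert (Hlo : IZR (-1) < IZR m) by (simpl; lra).
  assert (Hhi : IZR m < IZR 1) by lra.
  apply lt_IZR in Hlo. apply lt_IZR in Hhi. assert (m = 0%Z) by lia. subst m.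
  simpl in Em. symmetry in Em. apply Rmult_integral in Em. destruct Em as [E|E]; [lra|].
  rewrite E, Rabs_R0 in Hr. lra.
Qed.

Definition admissible_path F a P :=
  embedded_path P /\ cong (F (P 0)) a /\ cong (F (P 1)) a /\ factors_through_R F P a.

Lemma lin_path_admissible F a p0 p1 : continuity F -> cong (F p0) a -> F p1 = F p0 ->
  0 < Rabs (p1 - p0) < 1 -> admissible_path F a (lin_path p0 p1).
Proof.
  intros Hc [k Hk] Hp Hr.
  assert (H0 : lin_path p0 p1 0 = p0) by (unfold lin_path; ring).
  assert (H1 : lin_path p0 p1 1 = p1) by (unfold lin_path; ring).
  split; [apply lin_path_embedded, Hr|].
  rewrite H0, H1. split; [exists k; exact Hk| split; [exists k; lra|]].
  exists (fun tau => F (lin_path p0 p1 tau) - F p0). split; [|split; [|split]].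
  - apply cont_on01_of_continuity. apply (continuity_minus _ (fun _ => F p0)).
    + apply (continuity_comp (lin_path p0 p1) F); [apply lin_path_continuous| exact Hc].
    + apply continuity_const. intros s t. reflexivity.
  - rewrite H0. ring.
  - rewrite H1. lra.
  - intros tau _. exists (- k)%Z. rewrite opp_IZR. lra.
Qed.

Lemma lin_path_segment p0 p1 s1 s2 u v : s1 <= s2 -> u <= v ->
  (lin_path p0 p1 s1 = u /\ lin_path p0 p1 s2 = v \/
   lin_path p0 p1 s1 = v /\ lin_path p0 p1 s2 = u) ->
  (forall tau, s1 <= tau <= s2 -> u <= lin_path p0 p1 tau <= v) /\
  (forall w, u <= w <= v -> exists tau, s1 <= tau <= s2 /\ lin_path p0 p1 tau = w).
Proof.
  intros Hs Huv Hends.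
  (* "x lies between u and v" is (x - u) * (x - v) <= 0, symmetric in u and v *)
  assert (Hprod : forall x, (x - u) * (x - v) =
                   (x - lin_path p0 p1 s1) * (x - lin_path p0 p1 s2)).
  { destruct Hends as [[<- <-]|[<- <-]]; intro x; ring. }
  split.
  - intros tau Htau.
    assert (Hbetween : (lin_path p0 p1 tau - u) * (lin_path p0 p1 tau - v) <= 0).
    { rewrite Hprod. unfold lin_path.
      replace (_ * _) with ((tau - s1) * (tau - s2) * (p1 - p0) ^ 2) by ring.
      assert (Hsq := pow2_ge_0 (p1 - p0)).
      assert ((tau - s1) * (tau - s2) <= 0) by nra. nra. }
    nra.
  - intros w Hw. apply (ivt_in _ s1 s2 s1 s2 w (lin_path_continuous p0 p1)); [lra|lra|].
    replace (_ * _) with ((w - u) * (w - v)) by (rewrite Hprod; ring). nra.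
Qed.

Lemma ratio_pos_le1 x y : 0 < x <= y \/ y <= x < 0 -> 0 < x / y <= 1.
Proof.
  intros Hxy. assert (Hy : y <> 0) by lra.
  assert (E : x / y * y = x) by (field; exact Hy). nra.
Qed.

Lemma ratio_nonneg_lt1 x y : 0 <= x < y \/ y < x <= 0 -> 0 <= x / y < 1.
Proof.
  intros Hxy. assert (Hy : y <> 0) by lra.
  assert (E : x / y * y = x) by (field; exact Hy). nra.
Qed.

Lemma lin_path_starts_with p0 p1 u v : u < v ->
  (p0 = u /\ v <= p1 \/ p0 = v /\ p1 <= u) -> starts_with (lin_path p0 p1) u v p0.
Proof.
  intros Huv Hends.
  assert (Hs : exists s, 0 < s <= 1 /\
     (p0 = u /\ lin_path p0 p1 s = v \/ p0 = v /\ lin_path p0 p1 s = u)).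
  { destruct Hends as [[-> Hv]|[-> Hu]].
    - exists ((v - u) / (p1 - u)). split; [apply ratio_pos_le1; lra|].
      left. split; [reflexivity| apply lin_path_param; lra].
    - exists ((u - v) / (p1 - v)). split; [apply ratio_pos_le1; lra|].
      right. split; [reflexivity| apply lin_path_param; lra]. }
  destruct Hs as [s [Hs Hends']].
  assert (H0 : lin_path p0 p1 0 = p0) by (unfold lin_path; ring).
  destruct (lin_path_segment p0 p1 0 s u v) as [Hrange Hcover];
    [lra| lra| rewrite H0; exact Hends'|].
  exists s, 0%Z. change (IZR 0) with 0. rewrite !Rplus_0_r.
  split; [exact Hs| split; [exact H0| split; assumption]].
Qed.

Lemma lin_path_ends_with p0 p1 u v : u < v ->
  (p0 <= u /\ p1 = v \/ v <= p0 /\ p1 = u) -> ends_with (lin_path p0 p1) u v p1.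
Proof.
  intros Huv Hends.
  assert (Hs : exists s, 0 <= s < 1 /\
     (lin_path p0 p1 s = u /\ p1 = v \/ lin_path p0 p1 s = v /\ p1 = u)).
  { destruct Hends as [[Hu ->]|[Hv ->]].
    - exists ((u - p0) / (v - p0)). split; [apply ratio_nonneg_lt1; lra|].
      left. split; [apply lin_path_param; lra| reflexivity].
    - exists ((v - p0) / (u - p0)). split; [apply ratio_nonneg_lt1; lra|].
      right. split; [apply lin_path_param; lra| reflexivity]. }
  destruct Hs as [s [Hs Hends']].
  assert (H1 : lin_path p0 p1 1 = p1) by (unfold lin_path; ring).
  destruct (lin_path_segment p0 p1 s 1 u v) as [Hrange Hcover];
    [lra| lra| rewrite H1; exact Hends'|].
  exists s, 0%Z. change (IZR 0) with 0. rewrite !Rplus_0_r.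
  split; [exact Hs| split; [exact H1| split; assumption]].
Qed.

Lemma path_from_positive_arc F a b c uP vP : continuity F ->
  (forall t, cong (F t) a -> exists l, l <> 0 /\ derivable_pt_lim F t l) ->
  proper_arc a b -> (forall t, F (t + 1) = F t + c) -> F (uP + 1) <= F uP ->
  positive_arc F a b uP vP ->
  exists P, admissible_path F a P /\ starts_with P uP vP uP /\
    exists u' v', negative_arc F a b u' v' /\ ends_with P u' v' v'.
Proof.
  intros Hc Hreg Hab Hper Hdrop [Harc Hdeg].
  destruct (proj1 (arc_degree_1_iff F a b uP vP) Hdeg) as [Hua Hvb].
  destruct (return_arc F a b Hc Hreg Hab c uP vP Hper Hdrop Harc Hua Hvb)
    as [u [v [Harc' [Hub [Hva [Hu [Hv HFv]]]]]]].
  assert (Huv := proj1 Harc'). assert (HuvP := proj1 Harc).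
  exists (lin_path uP v). split; [apply lin_path_admissible; try assumption|split].
  - rewrite Rabs_pos_eq; lra.
  - apply lin_path_starts_with; lra.
  - exists u, v. split; [split; [exact Harc'| apply arc_degree_m1_iff; split; assumption]|].
    apply lin_path_ends_with; lra.
Qed.

Lemma path_from_negative_arc F a b c uN vN : continuity F ->
  (forall t, cong (F t) a -> exists l, l <> 0 /\ derivable_pt_lim F t l) ->
  proper_arc a b -> (forall t, F (t + 1) = F t + c) -> F (vN - 1) <= F vN ->
  negative_arc F a b uN vN ->
  exists P, admissible_path F a P /\ starts_with P uN vN vN /\
    exists u' v', positive_arc F a b u' v' /\ ends_with P u' v' u'.
Proof.
  intros Hc Hreg Hab Hper Hdrop [Harc Hdeg].
  destruct (proj1 (arc_degree_m1_iff F a b uN vN) Hdeg) as [Hub Hva].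
  set (G := fun t => F (- t)).
  assert (HG : forall t, G t = F (- t)) by reflexivity.
  assert (HGper : forall t, G (t + 1) = G t + - c).
  { intro t. unfold G. assert (Hshift := Hper (- (t + 1))).
    replace (- (t + 1) + 1) with (- t) in Hshift by ring. lra. }
  destruct (return_arc G a b (continuity_reflect F Hc) (regular_reflect F a Hreg) Hab
              (- c) (- vN) (- uN) HGper)
    as [u [v [Harc' [Hub' [Hva' [Hu [Hv HGv]]]]]]].
  - unfold G. rewrite Ropp_involutive. replace (- (- vN + 1)) with (vN - 1) by ring. exact Hdrop.
  - apply (component_arc_reflect F G); assumption.
  - unfold G. rewrite Ropp_involutive. exact Hva.
  - unfold G. rewrite Ropp_involutive. exact Hub.
  - unfold G in Hub', Hva', HGv. rewrite Ropp_involutive in HGv.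
    assert (HarcF : component_arc F a b (- v) (- u)).
    { apply (component_arc_reflect G F); [intro t; unfold G; rewrite Ropp_involutive; reflexivity|exact Harc']. }
    assert (Huv := proj1 Harc'). assert (HuvN := proj1 Harc).
    exists (lin_path vN (- v)). split; [apply lin_path_admissible; try assumption|split].
    + rewrite Rabs_left; lra.
    + apply lin_path_starts_with; lra.
    + exists (- v), (- u). split; [split; [exact HarcF| apply arc_degree_1_iff; split; assumption]|].
      apply lin_path_ends_with; lra.
Qed.

Theorem lemma3 (F : R -> R) (a b uP vP uN vN : R) :
  smooth_circle_map F ->
  self_transverse F ->
  proper_arc a b ->
  regular_value F a -> regular_value F b ->
  positive_arc F a b uP vP ->
  negative_arc F a b uN vN ->
  exists P : R -> R,
    embedded_path P /\
    cong (F (P 0)) a /\ cong (F (P 1)) a /\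
    factors_through_R F P a /\
    ((starts_with P uP vP uP /\
      exists u' v', negative_arc F a b u' v' /\ ends_with P u' v' v')
     \/
     (starts_with P uN vN vN /\
      exists u' v', positive_arc F a b u' v' /\ ends_with P u' v' u')).
Proof.
  intros [Hsmooth [d Hper]] _ Hab Hreg_a _ Hpos Hneg.
  assert (Hder : forall t, derivable_pt_lim F t (Derive F t)).
  { intro t. apply is_derive_Reals, Derive_correct, (Hsmooth 1%nat t). }
  assert (Hcont : continuity F).
  { intro t. apply derivable_continuous_pt. exists (Derive F t). apply Hder. }
  assert (Hreg : forall t, cong (F t) a -> exists l, l <> 0 /\ derivable_pt_lim F t l).
  { intros t Ht. exists (Derive F t). split; [apply Hreg_a, Ht| apply Hder]. }
  destruct (Rle_or_lt (IZR d) 0) as [Hd|Hd].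
  - destruct (path_from_positive_arc F a b (IZR d) uP vP Hcont Hreg Hab Hper)
      as [P [[Hemb [H0 [H1 Hfac]]] Hpath]]; [rewrite Hper; lra| exact Hpos|].
    exists P. split; [exact Hemb| split; [exact H0| split; [exact H1| split; [exact Hfac| left; exact Hpath]]]].
  - destruct (path_from_negative_arc F a b (IZR d) uN vN Hcont Hreg Hab Hper)
      as [P [[Hemb [H0 [H1 Hfac]]] Hpath]]; [| exact Hneg|].
    { assert (Hshift := Hper (vN - 1)). replace (vN - 1 + 1) with vN in Hshift by ring. lra. }
    exists P. split; [exact Hemb| split; [exact H0| split; [exact H1| split; [exact Hfac| right; exact Hpath]]]].
Qed.
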